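(* The sequent calculi $\mathbf{GCE}$, $\mathbf{GCM}$, $\mathbf{GCEN}$, $\mathbf{GCMN}$, $\mathbf{GCMC}$, $\mathbf{GCK}$ are sound and complete for the logics $\mathsf{CE}$, $\mathsf{CM}$, $\mathsf{CEN}$, $\mathsf{CMN}$, $\mathsf{CMC}$, $\mathsf{CK}$ respectively: for every formula $\phi$ of $\mathcal{L}_\triangleright$, the sequent $\Rightarrow\phi$ is derivable in the calculus iff $\phi$ belongs to the corresponding logic.
   Context: Formulas of $\mathcal{L}_\triangleright$ are built from atoms and $\bot$ with $\wedge,\vee,\to$ and binary $\triangleright$; $\top:=\bot\to\bot$. $\mathsf{CE}$ is the smallest set of $\mathcal{L}_\triangleright$-formulas containing all instances of classical tautologies and closed under modus ponens and the rule: from $\phi_0\leftrightarrow\phi_1$ and $\psi_0\leftrightarrow\psi_1$ infer $(\phi_0\triangleright\psi_0)\to(\phi_1\triangleright\psi_1)$. Axiom schemes: (CM) $(\phi\triangleright\psi\wedge\theta)\to(\phi\triangleright\psi)\wedge(\phi\triangleright\theta)$; (CC) $(\phi\triangleright\psi)\wedge(\phi\triangleright\theta)\to(\phi\triangleright\psi\wedge\theta)$; (CN) $\phi\triangleright\top$. $\mathsf{CEN}=\mathsf{CE}+(CN)$, $\mathsf{CM}=\mathsf{CE}+(CM)$, $\mathsf{CMN}=\mathsf{CM}+(CN)$, $\mathsf{CMC}=\mathsf{CM}+(CC)$, $\mathsf{CK}=\mathsf{CMC}+(CN)$ (adding all instances of the schemes as axioms). Sequents are $\Gamma\Rightarrow\Delta$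 with $\Gamma,\Delta$ finite multisets of formulas. $\mathbf{G3cp}$ has axioms $\Gamma,p\Rightarrow p,\Delta$ ($p$ atomic) and $\Gamma,\bot\Rightarrow\Delta$, and rules: $(L\wedge)$ from $\Gamma,\phi,\psi\Rightarrow\Delta$ infer $\Gamma,\phi\wedge\psi\Rightarrow\Delta$; $(R\wedge)$ from $\Gamma\Rightarrow\phi,\Delta$ and $\Gamma\Rightarrow\psi,\Delta$ infer $\Gamma\Rightarrow\phi\wedge\psi,\Delta$; $(L\vee)$ from $\Gamma,\phi\Rightarrow\Delta$ and $\Gamma,\psi\Rightarrow\Delta$ infer $\Gamma,\phi\vee\psi\Rightarrow\Delta$; $(R\vee)$ from $\Gamma\Rightarrow\phi,\psi,\Delta$ infer $\Gamma\Rightarrow\phi\vee\psi,\Delta$; $(L\to)$ from $\Gamma\Rightarrow\phi,\Delta$ and $\Gamma,\psi\Rightarrow\Delta$ infer $\Gamma,\phi\to\psi\Rightarrow\Delta$; $(R\to)$ from $\Gamma,\phi\Rightarrow\psi,\Delta$ infer $\Gamma\Rightarrow\phi\to\psi,\Delta$. $\mathbf{G3W}$ is $\mathbf{G3cp}$ plus weakening: from $\Gamma\Rightarrow\Delta$ infer $\Gamma,\phi\Rightarrow\Delta$, resp. $\Gamma\Rightarrow\phi,\Delta$. ''$\alpha\Leftrightarrow\beta$'' as a premise abbreviates the two premises $\alpha\Rightarrow\beta$, $\beta\Rightarrow\alpha$. Conditional rules: $(CE)$ from $\phi_0\Leftrightarrow\phi_1$ and $\psi_0\Leftrightarrow\psi_1$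 infer $\phi_1\triangleright\psi_1\Rightarrow\phi_0\triangleright\psi_0$; $(CM)$ from $\phi_0\Leftrightarrow\phi_1$ and $\psi_1\Rightarrow\psi_0$ infer $\phi_1\triangleright\psi_1\Rightarrow\phi_0\triangleright\psi_0$; $(CMC)$ for $n\ge1$, from $\phi_0\Leftrightarrow\phi_i$ ($1\le i\le n$) and $\psi_1,\dots,\psi_n\Rightarrow\psi_0$ infer $\phi_1\triangleright\psi_1,\dots,\phi_n\triangleright\psi_n\Rightarrow\phi_0\triangleright\psi_0$; $(CN)$ from $\Rightarrow\psi_0$ infer $\Rightarrow\phi_0\triangleright\psi_0$. $\mathbf{GCE},\mathbf{GCM},\mathbf{GCMC}$ are $\mathbf{G3W}$ plus $(CE)$, $(CM)$, $(CMC)$; $\mathbf{GCEN},\mathbf{GCMN},\mathbf{GCK}$ are these plus $(CN)$. The cut rule is not part of the calculi. *)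

From Stdlib Require Import List Permutation Bool.
Import ListNotations.

Inductive form : Type :=
| Atom : nat -> form
| Bot : form
| And : form -> form -> form
| Or : form -> form -> form
| Imp : form -> form -> form
| Cond : form -> form -> form.

Definition Top : form := Imp Bot Bot.
Definition Iff (a b : form) : form := And (Imp a b) (Imp b a).

(* Instances of classical tautologies: formulas true under every boolean
   valuation that treats atoms and conditional formulas as propositional
   variables. *)
Fixpoint eval (v : form -> bool) (f : form) : bool :=
  match f with
  | Atom _ => v f
  | Bot => false
  | And a b => eval v a && eval v b
  | Or a b => eval v a || eval v b
  | Imp a b => implb (eval v a) (eval v b)
  | Cond _ _ => v f
  end.

Definition taut_instance (f : form) : Prop := forall v, eval v f = true.

Inductive logic : Type := LCE | LCM | LCEN | LCMN | LCMC | LCK.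

Definition hasCM (L : logic) : Prop :=
  L = LCM \/ L = LCMN \/ L = LCMC \/ L = LCK.
Definition hasCC (L : logic) : Prop := L = LCMC \/ L = LCK.
Definition hasCN (L : logic) : Prop := L = LCEN \/ L = LCMN \/ L = LCK.

Inductive Thm (L : logic) : form -> Prop :=
| th_taut : forall f, taut_instance f -> Thm L f
| th_mp : forall a b, Thm L (Imp a b) -> Thm L a -> Thm L b
| th_re : forall a0 a1 b0 b1, Thm L (Iff a0 a1) -> Thm L (Iff b0 b1) ->
    Thm L (Imp (Cond a0 b0) (Cond a1 b1))
| th_CM : forall a b c, hasCM L ->
    Thm L (Imp (Cond a (And b c)) (And (Cond a b) (Cond a c)))
| th_CC : forall a b c, hasCC L ->
    Thm L (Imp (And (Cond a b) (Cond a c)) (Cond a (And b c)))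
| th_CN : forall a, hasCN L -> Thm L (Cond a Top).

Definition ruleCE (L : logic) : Prop := L = LCE \/ L = LCEN.
Definition ruleCM (L : logic) : Prop := L = LCM \/ L = LCMN.
Definition ruleCMC (L : logic) : Prop := L = LCMC \/ L = LCK.
Definition ruleCN (L : logic) : Prop := hasCN L.

(* Sequent calculi GCE, GCM, GCEN, GCMN, GCMC, GCK (cut-free, G3cp +
   weakening + conditional rules). Sequents are pairs of lists; the rule
   [g_perm] makes them multisets. *)
Inductive GD (L : logic) : list form -> list form -> Prop :=
| g_perm : forall G D G' D', GD L G D -> Permutation G G' -> Permutation D D' ->
    GD L G' D'
| g_ax : forall G D p, GD L (Atom p :: G) (Atom p :: D)
| g_bot : forall G D, GD L (Bot :: G) D
| g_Land : forall G D a b, GD L (a :: b :: G) D -> GD L (And a b :: G) D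
| g_Rand : forall G D a b, GD L G (a :: D) -> GD L G (b :: D) ->
    GD L G (And a b :: D)
| g_Lor : forall G D a b, GD L (a :: G) D -> GD L (b :: G) D ->
    GD L (Or a b :: G) D
| g_Ror : forall G D a b, GD L G (a :: b :: D) -> GD L G (Or a b :: D)
| g_Limp : forall G D a b, GD L G (a :: D) -> GD L (b :: G) D ->
    GD L (Imp a b :: G) D
| g_Rimp : forall G D a b, GD L (a :: G) (b :: D) -> GD L G (Imp a b :: D)
| g_WL : forall G D a, GD L G D -> GD L (a :: G) D
| g_WR : forall G D a, GD L G D -> GD L G (a :: D)
| g_CE : forall a0 a1 b0 b1, ruleCE L ->
    GD L [a0] [a1] -> GD L [a1] [a0] -> GD L [b0] [b1] -> GD L [b1] [b0] ->
    GD L [Cond a1 b1] [Cond a0 b0]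
| g_CM : forall a0 a1 b0 b1, ruleCM L ->
    GD L [a0] [a1] -> GD L [a1] [a0] -> GD L [b1] [b0] ->
    GD L [Cond a1 b1] [Cond a0 b0]
| g_CMC : forall (ps : list (form * form)) a0 b0, ruleCMC L ->
    ps <> [] ->
    (forall p, In p ps -> GD L [a0] [fst p]) ->
    (forall p, In p ps -> GD L [fst p] [a0]) ->
    GD L (map snd ps) [b0] ->
    GD L (map (fun p => Cond (fst p) (snd p)) ps) [Cond a0 b0]
| g_CN : forall a0 b0, ruleCN L -> GD L [] [b0] -> GD L [] [Cond a0 b0].

(* Soundness: every rule preserves the provability of the formula [Seq G D] = /\G -> \/D.

   Completeness needs no cut elimination; it goes by induction on the nesting depth of
   conditionals. The propositional rules are invertible, so a sequent whose formula is a
   theorem reduces to sequents G0 => D0 of atoms and conditionals. Valuate an atom as true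
   iff it lies in G0, and [Cond a b] as true iff G0 contains conditionals [Cond a_i b_i]
   (as many as the rules of the calculus admit) with each a_i provably equivalent to a and
   /\b_i provably implying (or, without (CM), equivalent to) b. The Hilbert system itself
   supplies the transitivity of these equivalences, so this valuation satisfies every
   theorem, and it satisfies G0. Hence it satisfies some member of D0: an atom of G0, or a
   conditional whose witnesses, by the induction hypothesis on the shallower a, a_i, b,
   b_i, give the premises of a conditional rule. *)

From Stdlib Require Import List Permutation Bool Arith Lia ClassicalEpsilon.
Import ListNotations.

Fixpoint conj_list (l : list form) : form :=
  match l with [] => Top | x :: l => And x (conj_list l) end.
Fixpoint disj_list (l : list form) : form :=
  match l with [] => Bot | x :: l => Or x (disj_list l) end.

Definition Seq (G D : list form) : form := Imp (conj_list G) (disj_list D).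

Lemma eval_conj_list v l : eval v (conj_list l) = forallb (eval v) l.
Proof. induction l as [|x l IH]; simpl; rewrite ?IH; reflexivity. Qed.

Lemma eval_disj_list v l : eval v (disj_list l) = existsb (eval v) l.
Proof. induction l as [|x l IH]; simpl; rewrite ?IH; reflexivity. Qed.

Lemma eval_Seq v G D :
  eval v (Seq G D) = implb (forallb (eval v) G) (existsb (eval v) D).
Proof. unfold Seq; simpl; rewrite eval_conj_list, eval_disj_list; reflexivity. Qed.

Lemma forallb_perm {A} (f : A -> bool) l l' :
  Permutation l l' -> forallb f l = forallb f l'.
Proof. induction 1; simpl; try congruence; destruct (f x), (f y); reflexivity. Qed.

Lemma existsb_perm {A} (f : A -> bool) l l' :
  Permutation l l' -> existsb f l = existsb f l'.
Proof. induction 1; simpl; try congruence; destruct (f x), (f y); reflexivity. Qed.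

Ltac bool_cases :=
  intros; repeat match goal with H : _ = true |- _ => revert H end; simpl;
  rewrite ?eval_Seq, ?eval_conj_list, ?eval_disj_list;
  repeat match goal with
  | |- context [eval ?v ?x] => destruct (eval v x)
  | |- context [forallb ?f ?l] => destruct (forallb f l)
  | |- context [existsb ?f ?l] => destruct (existsb f l)
  | |- context [?v (Cond ?a ?b)] => destruct (v (Cond a b))
  | |- context [?v (Atom ?p)] => destruct (v (Atom p))
  end; simpl; auto; try discriminate.

Ltac by_taut := apply th_taut; intro v; solve [bool_cases].
Ltac mp_with H := refine (th_mp _ _ _ _ H).

Section HilbertFacts.
Variable L : logic.

Lemma thm_cond_congr a0 a1 b0 b1 :
  Thm L (Imp a0 a1) -> Thm L (Imp a1 a0) -> Thm L (Imp b0 b1) -> Thm L (Imp b1 b0) ->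
  Thm L (Imp (Cond a0 b0) (Cond a1 b1)).
Proof.
  intros Ha01 Ha10 Hb01 Hb10; apply th_re; unfold Iff.
  - mp_with Ha01; mp_with Ha10; by_taut.
  - mp_with Hb01; mp_with Hb10; by_taut.
Qed.

Lemma thm_cond_mono a0 a1 b0 b1 : hasCM L ->
  Thm L (Imp a0 a1) -> Thm L (Imp a1 a0) -> Thm L (Imp b0 b1) ->
  Thm L (Imp (Cond a0 b0) (Cond a1 b1)).
Proof.
  intros HCM Ha01 Ha10 Hb.
  assert (Hb' : Thm L (Imp b0 (And b1 b0))) by (mp_with Hb; by_taut).
  assert (Hb'' : Thm L (Imp (And b1 b0) b0)) by by_taut.
  assert (Hcongr := thm_cond_congr _ _ _ _ Ha01 Ha10 Hb' Hb'').
  mp_with Hcongr; mp_with (th_CM L a1 b1 b0 HCM); by_taut.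
Qed.

(* Generalised over [c] so that the induction needs no base case for the empty list, which (CC) alone cannot provide. *)
Lemma thm_cond_conj_aux a c (ps : list (form * form)) : hasCC L ->
  (forall p, In p ps -> Thm L (Imp (fst p) a) /\ Thm L (Imp a (fst p))) ->
  Thm L (Imp (And (Cond a c) (conj_list (map (fun p => Cond (fst p) (snd p)) ps)))
             (Cond a (And c (conj_list (map snd ps))))).
Proof.
  intros HCC; revert c; induction ps as [|[a1 b1] ps IH]; intros c Hps; simpl.
  - assert (Ha : Thm L (Imp a a)) by by_taut.
    assert (Hc1 : Thm L (Imp c (And c Top))) by by_taut.
    assert (Hc2 : Thm L (Imp (And c Top) c)) by by_taut.
    mp_with (thm_cond_congr _ _ _ _ Ha Ha Hc1 Hc2); by_taut.
  - destruct (Hps (a1, b1) (or_introl eq_refl)) as [Ha1 Ha2]; simpl in Ha1, Ha2.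
    assert (Hb : Thm L (Imp b1 b1)) by by_taut.
    mp_with (thm_cond_congr _ _ _ _ Ha1 Ha2 Hb Hb).
    mp_with (IH b1 (fun p Hp => Hps p (or_intror Hp))).
    mp_with (th_CC L a c (And b1 (conj_list (map snd ps))) HCC).
    by_taut.
Qed.

Lemma thm_cond_conj a (ps : list (form * form)) : hasCC L -> ps <> [] ->
  (forall p, In p ps -> Thm L (Imp (fst p) a) /\ Thm L (Imp a (fst p))) ->
  Thm L (Imp (conj_list (map (fun p => Cond (fst p) (snd p)) ps)) (Cond a (conj_list (map snd ps)))).
Proof.
  intros HCC Hne Hps; destruct ps as [|[a1 b1] ps]; [congruence|].
  destruct (Hps (a1, b1) (or_introl eq_refl)) as [Ha1 Ha2]; simpl in Ha1, Ha2 |- *.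
  assert (Hb : Thm L (Imp b1 b1)) by by_taut.
  mp_with (thm_cond_congr _ _ _ _ Ha1 Ha2 Hb Hb).
  mp_with (thm_cond_conj_aux a b1 ps HCC (fun p Hp => Hps p (or_intror Hp))).
  by_taut.
Qed.

Lemma thm_cond_of_thm a b : hasCN L -> Thm L b -> Thm L (Cond a b).
Proof.
  intros HCN Hb.
  assert (Ha : Thm L (Imp a a)) by by_taut.
  assert (Hb1 : Thm L (Imp Top b)) by (mp_with Hb; by_taut).
  assert (Hb2 : Thm L (Imp b Top)) by by_taut.
  exact (th_mp _ _ _ (thm_cond_congr _ _ _ _ Ha Ha Hb1 Hb2) (th_CN L a HCN)).
Qed.

Lemma thm_Seq_perm G D G' D' :
  Permutation G G' -> Permutation D D' -> Thm L (Seq G D) -> Thm L (Seq G' D').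
Proof.
  intros HG HD H; mp_with H; apply th_taut; intro v; cbn [eval].
  rewrite !eval_Seq, (forallb_perm _ _ _ HG), (existsb_perm _ _ _ HD); solve [bool_cases].
Qed.

Lemma GD_sound G D : GD L G D -> Thm L (Seq G D).
Proof.
  induction 1;
    try solve [by_taut | mp_with IHGD; by_taut | mp_with IHGD1; mp_with IHGD2; by_taut].
  - exact (thm_Seq_perm _ _ _ _ H0 H1 IHGD).
  - assert (Ha10 : Thm L (Imp a1 a0)) by (mp_with IHGD2; by_taut).
    assert (Ha01 : Thm L (Imp a0 a1)) by (mp_with IHGD1; by_taut).
    assert (Hb10 : Thm L (Imp b1 b0)) by (mp_with IHGD4; by_taut).
    assert (Hb01 : Thm L (Imp b0 b1)) by (mp_with IHGD3; by_taut).
    mp_with (thm_cond_congr _ _ _ _ Ha10 Ha01 Hb10 Hb01); by_taut.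
  - assert (HCM : hasCM L) by (destruct H as [-> | ->]; unfold hasCM; auto).
    assert (Ha10 : Thm L (Imp a1 a0)) by (mp_with IHGD2; by_taut).
    assert (Ha01 : Thm L (Imp a0 a1)) by (mp_with IHGD1; by_taut).
    assert (Hb10 : Thm L (Imp b1 b0)) by (mp_with IHGD3; by_taut).
    mp_with (thm_cond_mono _ _ _ _ HCM Ha10 Ha01 Hb10); by_taut.
  - assert (HCM : hasCM L) by (destruct H as [-> | ->]; unfold hasCM; auto).
    assert (HCC : hasCC L) by (destruct H as [-> | ->]; unfold hasCC; auto).
    assert (Hps : forall p, In p ps -> Thm L (Imp (fst p) a0) /\ Thm L (Imp a0 (fst p))).
    { intros p Hp; split; [mp_with (H4 p Hp) | mp_with (H2 p Hp)]; by_taut. }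
    assert (Ha : Thm L (Imp a0 a0)) by by_taut.
    assert (Hb : Thm L (Imp (conj_list (map snd ps)) b0)) by (mp_with IHGD; by_taut).
    mp_with (thm_cond_conj a0 ps HCC H0 Hps).
    mp_with (thm_cond_mono _ _ _ _ HCM Ha Ha Hb).
    by_taut.
  - assert (Hb : Thm L b0) by (mp_with IHGD; by_taut).
    mp_with (thm_cond_of_thm a0 b0 H Hb); by_taut.
Qed.

End HilbertFacts.

Definition form_eq_dec (x y : form) : {x = y} + {x <> y}.
Proof. decide equality; apply Nat.eq_dec. Defined.

Definition pair_eq_dec (p q : form * form) : {p = q} + {p <> q}.
Proof. decide equality; apply form_eq_dec. Defined.

Lemma perm_of_In {A} (x : A) l : In x l -> exists l', Permutation l (x :: l').
Proof.
  intros Hx; destruct (in_split _ _ Hx) as [l1 [l2 ->]].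
  exists (l1 ++ l2); symmetry; apply Permutation_middle.
Qed.

Lemma perm_of_NoDup_incl {A} (l G : list A) :
  NoDup l -> incl l G -> exists G', Permutation G (l ++ G').
Proof.
  revert G; induction l as [|x l IH]; intros G Hnd Hincl; [exists G; reflexivity|].
  inversion Hnd as [|? ? Hx Hnd']; subst.
  destruct (perm_of_In x G (Hincl x (or_introl eq_refl))) as [G1 HG1].
  destruct (IH G1 Hnd') as [G' HG'].
  - intros y Hy; destruct (Permutation_in _ HG1 (Hincl y (or_intror Hy))) as [<- | Hy']; tauto.
  - exists G'; rewrite HG1, HG'; reflexivity.
Qed.

Lemma GD_weaken L G D G' D' G1 D1 :
  GD L G D -> Permutation G' (G ++ G1) -> Permutation D' (D ++ D1) -> GD L G' D'.
Proof.
  intros H HG HD; apply g_perm with (G1 ++ G) (D1 ++ D).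
  - clear HG HD; induction D1 as [|y D1 IH]; [|apply g_WR; exact IH].
    induction G1 as [|x G1 IH]; [exact H | apply g_WL; exact IH].
  - rewrite HG; apply Permutation_app_comm.
  - rewrite HD; apply Permutation_app_comm.
Qed.

Section CanonicalValuation.
Variables (L : logic) (G0 : list form).

(* [ps] lists conditionals of [G0] from which a conditional rule of [L], read modulo
   provable equivalence, derives [Cond a b]. *)
Record supports (a b : form) (ps : list (form * form)) : Prop := {
  supports_In : forall p, In p ps -> In (Cond (fst p) (snd p)) G0;
  supports_nil : ps = [] -> hasCN L;
  supports_length : hasCC L \/ length ps <= 1;
  supports_fst : forall p, In p ps -> Thm L (Imp (fst p) a) /\ Thm L (Imp a (fst p));
  supports_snd : Thm L (Imp (conj_list (map snd ps)) b);
  supports_snd_rev : hasCM L \/ Thm L (Imp b (conj_list (map snd ps)))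
}.

Definition cond_support (a b : form) : Prop := exists ps, supports a b ps.

Definition canon (x : form) : bool :=
  match x with
  | Atom _ => if in_dec form_eq_dec x G0 then true else false
  | Cond a b => if excluded_middle_informative (cond_support a b) then true else false
  | _ => false
  end.

Lemma canon_Cond a b : canon (Cond a b) = true <-> cond_support a b.
Proof.
  simpl; destruct (excluded_middle_informative (cond_support a b)); split; congruence.
Qed.

Lemma cond_support_In a b : In (Cond a b) G0 -> cond_support a b.
Proof.
  intros H; exists [(a, b)]; split; simpl.
  - intros p [<- | []]; exact H.
  - discriminate.
  - right; auto.
  - intros p [<- | []]; split; by_taut.
  - by_taut.
  - right; by_taut.
Qed.

Lemma cond_support_congr a a' b b' :
  Thm L (Imp a a') -> Thm L (Imp a' a) -> Thm L (Imp b b') ->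
  hasCM L \/ Thm L (Imp b' b) ->
  cond_support a b -> cond_support a' b'.
Proof.
  intros Ha Ha' Hb Hb' [ps [Hin Hnil Hlen Hfst Hsnd Hsnd']].
  exists ps; split; auto.
  - intros p Hp; destruct (Hfst p Hp) as [H1 H2]; split.
    + mp_with H1; mp_with Ha; by_taut.
    + mp_with H2; mp_with Ha'; by_taut.
  - mp_with Hsnd; mp_with Hb; by_taut.
  - destruct Hsnd' as [? | H1]; [left; assumption|].
    destruct Hb' as [? | H2]; [left; assumption|].
    right; mp_with H1; mp_with H2; by_taut.
Qed.

Lemma cond_support_And a b c : hasCC L ->
  cond_support a b -> cond_support a c -> cond_support a (And b c).
Proof.
  intros HCC [ps [Hin Hnil _ Hfst Hsnd _]] [qs [Hin' Hnil' _ Hfst' Hsnd' _]].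
  exists (ps ++ qs); split; auto.
  - intros p Hp; apply in_app_or in Hp; destruct Hp; auto.
  - intros E; apply app_eq_nil in E; apply Hnil, E.
  - intros p Hp; apply in_app_or in Hp; destruct Hp; auto.
  - mp_with Hsnd; mp_with Hsnd'; rewrite map_app; apply th_taut; intro v; cbn [eval].
    rewrite !eval_conj_list, forallb_app; bool_cases.
  - left; destruct HCC as [-> | ->]; unfold hasCM; auto.
Qed.

Lemma cond_support_Top a : hasCN L -> cond_support a Top.
Proof.
  intros HCN; exists []; split; simpl; try tauto.
  - right; auto.
  - by_taut.
  - right; by_taut.
Qed.

Lemma canon_Thm x : Thm L x -> eval canon x = true.
Proof.
  induction 1 as [x Hx | a b _ IHab _ IHa | a0 a1 b0 b1 Ha _ Hb _
                 | a b c HCM | a b c HCC | a HCN];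
    cbn [eval]; rewrite ?implb_true_iff, ?andb_true_iff, ?canon_Cond.
  - apply Hx.
  - cbn [eval] in IHab; rewrite IHa in IHab; exact IHab.
  - apply cond_support_congr; [mp_with Ha; by_taut .. | mp_with Hb; by_taut | right; mp_with Hb; by_taut].
  - intros H; split; revert H; apply cond_support_congr; try (left; exact HCM); by_taut.
  - intros [Hb Hc]; exact (cond_support_And a b c HCC Hb Hc).
  - exact (cond_support_Top a HCN).
Qed.

End CanonicalValuation.

Fixpoint cdepth (x : form) : nat :=
  match x with
  | Atom _ | Bot => 0
  | And a b | Or a b | Imp a b => max (cdepth a) (cdepth b)
  | Cond a b => S (max (cdepth a) (cdepth b))
  end.

Fixpoint weight (x : form) : nat :=
  match x with
  | And a b | Or a b | Imp a b => S (weight a + weight b)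
  | _ => 0
  end.

Definition bounded (n : nat) (l : list form) : Prop := forall x, In x l -> cdepth x <= n.

Lemma bounded_cons n x l : bounded n (x :: l) <-> cdepth x <= n /\ bounded n l.
Proof.
  unfold bounded; simpl; split.
  - intros H; split; auto.
  - intros [Hx Hl] y [<- | Hy]; auto.
Qed.

Lemma bounded_nil n : bounded n [].
Proof. intros x []. Qed.

Lemma bounded_single n x : cdepth x <= n -> bounded n [x].
Proof. intros Hx; apply bounded_cons; split; [exact Hx | apply bounded_nil]. Qed.

Lemma bounded_perm n l l' : Permutation l l' -> bounded n l -> bounded n l'.
Proof. intros Hp Hl x Hx; apply Hl, (Permutation_in _ (Permutation_sym Hp) Hx). Qed.

Definition complete_upto (L : logic) (n : nat) : Prop :=
  forall G D, bounded n G -> bounded n D -> Thm L (Seq G D) -> GD L G D.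

Lemma rule_cases L :
  ruleCMC L \/ (ruleCM L /\ ~ hasCC L) \/ (ruleCE L /\ ~ hasCC L /\ ~ hasCM L).
Proof.
  unfold ruleCMC, ruleCM, ruleCE, hasCC, hasCM.
  destruct L; [right; right | right; left | right; right | right; left | left | left];
    intuition discriminate.
Qed.

Lemma forallb_map_snd_nodup (f : form -> bool) ps :
  forallb f (map snd (nodup pair_eq_dec ps)) = forallb f (map snd ps).
Proof.
  apply Bool.eq_iff_eq_true; rewrite !forallb_forall.
  split; intros H x Hx; apply H; apply in_map_iff in Hx as [p [<- Hp]];
    apply in_map; [apply nodup_In | apply nodup_In in Hp]; exact Hp.
Qed.

Lemma GD_single_of_Thm L m x y :
  complete_upto L m -> cdepth x <= m -> cdepth y <= m -> Thm L (Imp x y) -> GD L [x] [y].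
Proof.
  intros IH Hx Hy Hxy; apply IH; [apply bounded_single; lia .. | mp_with Hxy; by_taut].
Qed.

Lemma supports_cdepth L m G0 a b ps :
  bounded (S m) G0 -> supports L G0 a b ps ->
  forall p, In p ps -> cdepth (fst p) <= m /\ cdepth (snd p) <= m.
Proof.
  intros HG0 Hps p Hp; specialize (HG0 _ (supports_In _ _ _ _ _ Hps p Hp)); simpl in HG0; lia.
Qed.

(* Duplicates in [ps] are removed first: the conclusion of (CMC) must be a sub-multiset of [G0]. *)
Lemma GD_CMC_of_supports L m G0 a0 b0 ps :
  complete_upto L m -> ruleCMC L -> ps <> [] -> bounded (S m) G0 ->
  cdepth a0 <= m -> cdepth b0 <= m -> supports L G0 a0 b0 ps -> GD L G0 [Cond a0 b0].
Proof.
  intros IH HR Hne HG0 Ha0 Hb0 Hps.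
  pose proof (supports_cdepth _ _ _ _ _ _ HG0 Hps) as Hdepth.
  destruct Hps as [Hin _ _ Hfst Hsnd _].
  set (ps1 := nodup pair_eq_dec ps).
  assert (Hps1 : forall q, In q ps1 <-> In q ps) by (intro; apply nodup_In).
  assert (Hnd : NoDup (map (fun q => Cond (fst q) (snd q)) ps1)).
  { apply FinFun.Injective_map_NoDup; [|apply NoDup_nodup].
    intros [x1 x2] [y1 y2] E; injection E as -> ->; reflexivity. }
  destruct (perm_of_NoDup_incl _ G0 Hnd) as [G1 HG1].
  { intros z Hz; apply in_map_iff in Hz as [q [<- Hq]]; apply Hin, Hps1, Hq. }
  apply GD_weaken with (map (fun q => Cond (fst q) (snd q)) ps1) [Cond a0 b0] G1 [];
    [| exact HG1 | reflexivity].
  apply g_CMC; [exact HR | | | |].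
  - destruct ps as [|p ps]; [contradiction|].
    intros E; assert (Hp : In p ps1) by (apply Hps1; left; reflexivity).
    rewrite E in Hp; destruct Hp.
  - intros q Hq; apply Hps1 in Hq.
    apply (GD_single_of_Thm L m); [exact IH | exact Ha0 | apply (Hdepth q Hq) | apply (Hfst q Hq)].
  - intros q Hq; apply Hps1 in Hq.
    apply (GD_single_of_Thm L m); [exact IH | apply (Hdepth q Hq) | exact Ha0 | apply (Hfst q Hq)].
  - apply IH; [| apply bounded_single; exact Hb0 |].
    + intros z Hz; apply in_map_iff in Hz as [q [<- Hq]]; apply Hdepth, Hps1, Hq.
    + mp_with Hsnd; apply th_taut; intro v; cbn [eval].
      unfold ps1; rewrite eval_Seq, !eval_conj_list, forallb_map_snd_nodup.
      solve [bool_cases].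
Qed.

Lemma GD_Cond_of_support L m G0 a0 b0 :
  complete_upto L m -> bounded (S m) G0 -> cdepth (Cond a0 b0) <= S m ->
  cond_support L G0 a0 b0 -> GD L G0 [Cond a0 b0].
Proof.
  intros IH HG0 Hab [ps Hps]; simpl in Hab.
  pose proof (supports_cdepth _ _ _ _ _ _ HG0 Hps) as Hdepth.
  pose proof Hps as [Hin Hnil Hlen Hfst Hsnd Hsnd'].
  destruct ps as [|[a1 b1] ps].
  - apply GD_weaken with [] [Cond a0 b0] G0 []; [| reflexivity | reflexivity].
    apply g_CN; [apply Hnil; reflexivity|].
    apply IH; [apply bounded_nil | apply bounded_single; lia | mp_with Hsnd; by_taut].
  - destruct (rule_cases L) as [HR | HR];
      [apply (GD_CMC_of_supports L m G0 a0 b0 ((a1, b1) :: ps)); auto; [discriminate | lia ..]|].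
    assert (ps = []) as ->
      by (destruct ps; [reflexivity | destruct Hlen as [? | Hlen]; [tauto | simpl in Hlen; lia]]).
    destruct (perm_of_In _ _ (Hin (a1, b1) (or_introl eq_refl))) as [G1 HG1].
    destruct (Hfst (a1, b1) (or_introl eq_refl)) as [Ha1 Ha2].
    destruct (Hdepth (a1, b1) (or_introl eq_refl)) as [Hd1 Hd2]; simpl in *.
    apply GD_weaken with [Cond a1 b1] [Cond a0 b0] G1 []; [| exact HG1 | reflexivity].
    assert (Hb10 : GD L [b1] [b0]) by (apply (GD_single_of_Thm L m); auto; try lia; mp_with Hsnd; by_taut).
    destruct HR as [[HR _] | [HR [_ HCM]]].
    + apply g_CM; [exact HR | apply (GD_single_of_Thm L m); auto; lia .. | exact Hb10].
    + destruct Hsnd' as [? | Hsnd']; [contradiction|].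
      apply g_CE; [exact HR | apply (GD_single_of_Thm L m); auto; lia .. | | exact Hb10].
      apply (GD_single_of_Thm L m); auto; try lia; mp_with Hsnd'; by_taut.
Qed.

Lemma GD_complete_atomic L n G0 D0 :
  (forall m, m < n -> complete_upto L m) ->
  (forall x, In x G0 -> weight x = 0) -> (forall x, In x D0 -> weight x = 0) ->
  bounded n G0 -> bounded n D0 -> Thm L (Seq G0 D0) -> GD L G0 D0.
Proof.
  intros IH HG0 HD0 BG BD HT.
  destruct (in_dec form_eq_dec Bot G0) as [HBot | HBot].
  { destruct (perm_of_In _ _ HBot) as [G1 HG1].
    apply GD_weaken with [Bot] [] G1 D0; [apply g_bot | exact HG1 | reflexivity]. }
  assert (Hctx : forallb (eval (canon L G0)) G0 = true).
  { apply forallb_forall; intros x Hx; specialize (HG0 x Hx).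
    destruct x as [p | | | | | a b]; simpl in HG0; try discriminate.
    - simpl; destruct in_dec; [reflexivity | contradiction].
    - contradiction.
    - apply canon_Cond, cond_support_In, Hx. }
  pose proof (canon_Thm L G0 _ HT) as Hv.
  rewrite eval_Seq, Hctx in Hv; apply existsb_exists in Hv as [x [Hx Hxv]].
  specialize (HD0 x Hx); specialize (BD x Hx).
  destruct x as [p | | | | | a b]; simpl in HD0; try discriminate.
  - simpl in Hxv; destruct in_dec as [HpG | ]; [| discriminate].
    destruct (perm_of_In _ _ HpG) as [G1 HG1]; destruct (perm_of_In _ _ Hx) as [D1 HD1].
    apply GD_weaken with [Atom p] [Atom p] G1 D1; [apply g_ax | exact HG1 | exact HD1].
  - destruct n as [|m]; [simpl in BD; lia|].
    destruct (perm_of_In _ _ Hx) as [D1 HD1].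
    apply GD_weaken with G0 [Cond a b] [] D1; [| rewrite app_nil_r; reflexivity | exact HD1].
    apply GD_Cond_of_support with m; auto.
    apply canon_Cond, Hxv.
Qed.

Fixpoint lweight (l : list form) : nat :=
  match l with [] => 0 | x :: l => weight x + lweight l end.

Lemma lweight_perm l l' : Permutation l l' -> lweight l = lweight l'.
Proof. induction 1; simpl; lia. Qed.

Lemma split_heavy l :
  (forall x, In x l -> weight x = 0) \/
  exists x l', Permutation l (x :: l') /\ 0 < weight x.
Proof.
  induction l as [|y l [IH | [x [l' [Hp Hx]]]]].
  - left; intros x [].
  - destruct (weight y) eqn:Ey.
    + left; intros x [<- | Hx]; auto.
    + right; exists y, l; split; [reflexivity | lia].
  - right; exists x, (y :: l'); split; [| exact Hx].
    rewrite Hp; apply perm_swap.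
Qed.

Ltac solve_bounded := repeat (apply bounded_cons; split); first [assumption | lia].

Section Decomposition.
Variables (L : logic) (n : nat).

Lemma GD_decompose_right G x D :
  (forall G' D', lweight G' + lweight D' < lweight G + lweight (x :: D) ->
     bounded n G' -> bounded n D' -> Thm L (Seq G' D') -> GD L G' D') ->
  0 < weight x -> bounded n G -> bounded n (x :: D) -> Thm L (Seq G (x :: D)) ->
  GD L G (x :: D).
Proof.
  intros IH Hx BG BD HT; apply bounded_cons in BD as [Bx BD].
  destruct x as [| | a b | a b | a b |]; simpl in Hx, Bx; try lia;
    [apply g_Rand | apply g_Ror | apply g_Rimp];
    apply IH; solve [simpl; lia | solve_bounded | mp_with HT; by_taut].
Qed.

Lemma GD_decompose_left G x D :
  (forall G' D', lweight G' + lweight D' < lweight (x :: G) + lweight D ->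
     bounded n G' -> bounded n D' -> Thm L (Seq G' D') -> GD L G' D') ->
  0 < weight x -> bounded n (x :: G) -> bounded n D -> Thm L (Seq (x :: G) D) ->
  GD L (x :: G) D.
Proof.
  intros IH Hx BG BD HT; apply bounded_cons in BG as [Bx BG].
  destruct x as [| | a b | a b | a b |]; simpl in Hx, Bx; try lia;
    [apply g_Land | apply g_Lor | apply g_Limp];
    apply IH; solve [simpl; lia | solve_bounded | mp_with HT; by_taut].
Qed.

Lemma complete_upto_of_atomic :
  (forall G D, (forall x, In x G -> weight x = 0) -> (forall x, In x D -> weight x = 0) ->
     bounded n G -> bounded n D -> Thm L (Seq G D) -> GD L G D) ->
  complete_upto L n.
Proof.
  intros Hatomic G D.
  remember (lweight G + lweight D) as w eqn:Hw; revert G D Hw.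
  induction w as [w IH] using lt_wf_ind; intros G D Hw BG BD HT.
  destruct (split_heavy D) as [HD | [x [D' [Hp Hx]]]];
    [destruct (split_heavy G) as [HG | [x [G' [Hp Hx]]]] |].
  - apply Hatomic; assumption.
  - rewrite (lweight_perm _ _ Hp) in Hw.
    apply g_perm with (x :: G') D; [| symmetry; exact Hp | reflexivity].
    apply GD_decompose_left; [intros G2 D2 Hlt; apply (IH (lweight G2 + lweight D2)); auto; lia
                             | exact Hx | apply bounded_perm with G; auto | exact BD
                             | apply (thm_Seq_perm L G D); auto].
  - rewrite (lweight_perm _ _ Hp) in Hw.
    apply g_perm with G (x :: D'); [| reflexivity | symmetry; exact Hp].
    apply GD_decompose_right; [intros G2 D2 Hlt; apply (IH (lweight G2 + lweight D2)); auto; lia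
                              | exact Hx | exact BG | apply bounded_perm with D; auto
                              | apply (thm_Seq_perm L G D); auto].
Qed.

End Decomposition.

Lemma GD_complete L n : complete_upto L n.
Proof.
  induction n as [n IH] using lt_wf_ind.
  apply complete_upto_of_atomic; intros G D.
  apply GD_complete_atomic; exact IH.
Qed.

Theorem mainTheorem3 : forall (L : logic) (phi : form),
  GD L [] [phi] <-> Thm L phi.
Proof.
  intros L phi; split; intros H.
  - apply GD_sound in H; mp_with H; by_taut.
  - apply (GD_complete L (cdepth phi)); [apply bounded_nil | apply bounded_single; lia |].
    mp_with H; by_taut.
Qed.
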